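(* Let $\widetilde{\mathcal M}$ be any single-demand diffusion auction mechanism and $\mathcal M$ the multi-demand mechanism obtained from it by the reduction. If $\widetilde{\mathcal M}$ is individually rational (resp. non-deficit, non-wasteful, efficient), then $\mathcal M$ is individually rational (resp. non-deficit, non-wasteful, efficient).
   Context: Single-demand model: a seller $s$ with $m\ge1$ identical items and a fixed neighbour set; buyers each want at most one item, have true valuation $v\ge0$ and true neighbour set, report a valuation $v'\ge 0$ and a subset of the true neighbour set; the profile graph has an edge $(x,y)$ iff $y$ is in the reported (for $s$: fixed) neighbour set of $x$; unreachable buyers get no item and pay $0$. A single-demand mechanism outputs $\pi_i\in\{0,1\}$ and $p_i\in\mathbb{R}$; utility $v_i\pi_i-p_i$. IR: every truthfully reporting buyer has nonnegative utility whatever the others report. ND: total payments $\ge0$ for every report profile. NW: number of items allocated $=\min\{m,\#\text{reachable buyers}\}$ for every report profile. Efficient: under truthful reports, $\sum_i v_i\pi_i$ equals the sum of the $m$ largest true valuations. Multi-demand model: same seller; buyers $B=\{1,\dots,n\}$; buyer $i$ has true profile $\eta_i=(\vec v_i,t_i)$ with $\vec v_i=(v_{i,1},\dots,v_{i,m})$, $v_{i,1}\ge\dots\ge v_{i,m}\ge0$ ($v_{i,j}$ is the value of its $j$-th item) and neighbour set $t_i\subseteq B$; it reports $\eta'_i=(\vec v'_i,t'_i)$ with $\vec v'_i\in\mathbb{R}^m_{\ge0}$, $t'_i\subseteq t_i$. A multi-demand mechanism outputs $\pi_{i,j}\in\{0,1\}$, $p_{i,j}\in\mathbb{R}$ ($1\le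 j\le m$); utility $u_i=\sum_j(v_{i,j}\pi_{i,j}-p_{i,j})$; revenue $\sum_{i,j}p_{i,j}$. IR, ND are as in the single-demand case; NW: $\sum_{i,j}\pi_{i,j}=\min\{m,\,m\cdot\#\text{reachable buyers}\}$; efficient: under truthful reports $\sum_{i,j}v_{i,j}\pi_{i,j}$ equals the sum of the $m$ largest values among all $v_{i,j}$. Reduction: given a multi-demand report profile $\eta'$, build a single-demand instance with buyer set $\widetilde B=\{i_j: i\in B,1\le j\le m\}$. Copy $i_j$ has true valuation $v_{i,j}$ and reported valuation $v'_{i,j}$. Neighbour sets: $i_j$ has neighbour $i_{j+1}$ for $j<m$ (both true and reported); $i_m$ has true neighbours $\{k_1:k\in t_i\}$ and reported neighbours $\{k_1:k\in t'_i\}$; the seller's neighbour set is $\{i_1: i\in r_s\}$. Each copy $i_j$ receives the priority of $i$. Apply $\widetilde{\mathcal M}$ to the resulting single-demand profile $\theta'$ and set $\pi_{i,j}(\eta')=\tilde\pi_{i_j}(\theta')$, $p_{i,j}(\eta')=\tilde p_{i_j}(\theta')$. *)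

From HB Require Import structures.
From mathcomp Require Import all_boot all_order all_algebra.
Set Implicit Arguments. Unset Strict Implicit. Unset Printing Implicit Defensive.
Import Order.TTheory GRing.Theory Num.Theory.
Local Open Scope ring_scope.

(* Profile graph and reachability.  Nodes are [option T]: [None] is the
   seller, [Some i] is buyer i.  [rs] is the seller's (fixed) neighbour
   set, [rn i] the reported neighbour set of buyer i.                    *)
Definition prof_rel (T : finType) (rs : {set T}) (rn : T -> {set T})
  : rel (option T) :=
  fun x y => match x, y with
             | None, Some j => j \in rs
             | Some k, Some j => j \in rn k
             | _, _ => false
             end.

Definition reachable (T : finType) (rs : {set T}) (rn : T -> {set T}) (i : T)
  : bool := connect (prof_rel rs rn) None (Some i).

Definition top_sum (R : realFieldType) (k : nat) (s : seq R) : R :=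
  \sum_(x <- take k (sort (fun x y : R => y <= x) s)) x.

(* A mechanism works on any finite buyer set
   T; its inputs are a priority [prio] (ties allowed), the seller's
   neighbour set [rs], the reported valuations [rv] and reported
   neighbour sets [rn].  *)
Record sd_mech (R : realFieldType) := SdMech {
  sd_alloc : forall T : finType,
      (T -> nat) -> {set T} -> (T -> R) -> (T -> {set T}) -> T -> bool;
  sd_pay : forall T : finType,
      (T -> nat) -> {set T} -> (T -> R) -> (T -> {set T}) -> T -> R }.

Section SingleDemand.
Variables (R : realFieldType) (m : nat) (M : sd_mech R).

Definition sd_diffusion : Prop :=
  forall (T : finType) prio (rs : {set T}) (rv : T -> R) (rn : T -> {set T})
         (i : T),
    ~~ reachable rs rn i ->
    sd_alloc M prio rs rv rn i = false /\ sd_pay M prio rs rv rn i = 0.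

Definition sd_IR : Prop :=
  forall (T : finType) prio (rs : {set T}) (tv : T -> R) (tn : T -> {set T})
         (rv : T -> R) (rn : T -> {set T}) (i : T),
    (forall k, 0 <= tv k) -> (forall k, 0 <= rv k) ->
    (forall k, rn k \subset tn k) ->
    rv i = tv i -> rn i = tn i ->
    0 <= (if sd_alloc M prio rs rv rn i then tv i else 0)
         - sd_pay M prio rs rv rn i.

Definition sd_ND : Prop :=
  forall (T : finType) prio (rs : {set T}) (rv : T -> R) (rn : T -> {set T}),
    (forall k, 0 <= rv k) ->
    0 <= \sum_(i : T) sd_pay M prio rs rv rn i.

Definition sd_NW : Prop :=
  forall (T : finType) prio (rs : {set T}) (rv : T -> R) (rn : T -> {set T}),
    (forall k, 0 <= rv k) ->
    #|[set i | sd_alloc M prio rs rv rn i]|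
      = minn m #|[set i | reachable rs rn i]|.

Definition sd_Eff : Prop :=
  forall (T : finType) prio (rs : {set T}) (tv : T -> R) (tn : T -> {set T}),
    (forall k, 0 <= tv k) -> (forall k, reachable rs tn k) ->
    \sum_(i : T) (if sd_alloc M prio rs tv tn i then tv i else 0)
      = top_sum m [seq tv i | i <- enum T].

End SingleDemand.

(* Multi-demand mechanisms: valuation vectors are [B -> 'I_m -> R]
   (index j : 'I_m stands for the (j+1)-th item).                      *)
Record md_mech (R : realFieldType) (m : nat) := MdMech {
  md_alloc : forall B : finType,
      (B -> nat) -> {set B} -> (B -> 'I_m -> R) -> (B -> {set B}) ->
      B -> 'I_m -> bool;
  md_pay : forall B : finType,
      (B -> nat) -> {set B} -> (B -> 'I_m -> R) -> (B -> {set B}) ->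
      B -> 'I_m -> R }.

Section MultiDemand.
Variables (R : realFieldType) (m : nat) (M : md_mech R m).

Definition md_true_val (B : finType) (tv : B -> 'I_m -> R) : Prop :=
  forall k, (forall j, 0 <= tv k j) /\
            (forall j1 j2 : 'I_m, (j1 <= j2)%N -> tv k j2 <= tv k j1).

Definition md_IR : Prop :=
  forall (B : finType) prio (rs : {set B}) (tv : B -> 'I_m -> R)
         (tn : B -> {set B}) (rv : B -> 'I_m -> R) (rn : B -> {set B}) (i : B),
    md_true_val tv -> (forall k j, 0 <= rv k j) ->
    (forall k, rn k \subset tn k) ->
    (forall j, rv i j = tv i j) -> rn i = tn i ->
    0 <= \sum_(j < m) ((if md_alloc M prio rs rv rn i j then tv i j else 0)
                        - md_pay M prio rs rv rn i j).

Definition md_ND : Prop :=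
  forall (B : finType) prio (rs : {set B}) (rv : B -> 'I_m -> R)
         (rn : B -> {set B}),
    (forall k j, 0 <= rv k j) ->
    0 <= \sum_(i : B) \sum_(j < m) md_pay M prio rs rv rn i j.

Definition md_NW : Prop :=
  forall (B : finType) prio (rs : {set B}) (rv : B -> 'I_m -> R)
         (rn : B -> {set B}),
    (forall k j, 0 <= rv k j) ->
    #|[set x : B * 'I_m | md_alloc M prio rs rv rn x.1 x.2]|
      = minn m (m * #|[set i | reachable rs rn i]|).

Definition md_Eff : Prop :=
  forall (B : finType) prio (rs : {set B}) (tv : B -> 'I_m -> R)
         (tn : B -> {set B}),
    md_true_val tv -> (forall k, reachable rs tn k) ->
    \sum_(i : B) \sum_(j < m)
        (if md_alloc M prio rs tv tn i j then tv i j else 0)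
      = top_sum m [seq tv x.1 x.2 | x <- enum {: B * 'I_m}].

End MultiDemand.

(* Buyer i is split into copies (i, j), j : 'I_m;
   copy (i,j) points to (i,j+1) for j+1 < m, the last copy points to the
   first copies of i's reported neighbours; the seller points to the first
   copies of its neighbours; each copy inherits the priority of i.      *)
Section Reduction.
Variables (R : realFieldType) (m : nat).

Definition red_prio (B : finType) (prio : B -> nat) : B * 'I_m -> nat :=
  fun x => prio x.1.

Definition red_seller (B : finType) (rs : {set B}) : {set B * 'I_m} :=
  [set x | (x.1 \in rs) && (val x.2 == 0%N)].

Definition red_val (B : finType) (rv : B -> 'I_m -> R) : B * 'I_m -> R :=
  fun x => rv x.1 x.2.

Definition red_nbr (B : finType) (rn : B -> {set B}) (x : B * 'I_m)
  : {set B * 'I_m} :=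
  if ((val x.2).+1 < m)%N then [set y | (y.1 == x.1) && (val y.2 == (val x.2).+1)]
  else [set y | (y.1 \in rn x.1) && (val y.2 == 0%N)].

Definition reduce (Mt : sd_mech R) : md_mech R m :=
  MdMech (fun B prio rs rv rn i j =>
            sd_alloc Mt (red_prio prio) (red_seller rs) (red_val rv)
                     (red_nbr rn) (i, j))
         (fun B prio rs rv rn i j =>
            sd_pay Mt (red_prio prio) (red_seller rs) (red_val rv)
                   (red_nbr rn) (i, j)).

End Reduction.

From HB Require Import structures.
From mathcomp Require Import all_boot all_order all_algebra.
Set Implicit Arguments. Unset Strict Implicit. Unset Printing Implicit Defensive.
Import Order.TTheory GRing.Theory Num.Theory.

(* Each multi-demand property of [reduce m Mt] is literally the
   corresponding single-demand property of Mt on the reduced profile, up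
   to bookkeeping:
   - IR and ND transfer pointwise; for IR one checks that truthful reports
     and sub-reports of neighbour sets are preserved by [red_nbr];
   - for NW and Efficiency one needs that a copy (i,j) is reachable in the
     reduced graph iff buyer i is reachable in the original one
     ([red_reachableE]), so the reachable copies form the product
     (reachable buyers) x 'I_m, of cardinality m times the number of
     reachable buyers.
   The reachability correspondence is proved by transporting paths along
   graph maps ([connect_map]): projection to the buyer in one direction,
   sending buyer i to its first copy in the other. *)

Lemma connect_map (T U : finType) (e : rel T) (e' : rel U) (f : T -> U) :
  (forall x y, e x y -> connect e' (f x) (f y)) ->
  forall x y, connect e x y -> connect e' (f x) (f y).
Proof.
move=> edge_path x y /connectP [p pth ->]; elim: p x pth => [|z p IH] x /=.
  by move=> _; exact: connect0.
by case/andP => exz pth; apply: connect_trans (edge_path _ _ exz) (IH _ pth).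
Qed.

Section ReducedReachability.
Variables (m : nat) (B : finType) (rs : {set B}) (rn : B -> {set B}).
Hypothesis m_gt0 : (0 < m)%N.

Let red_rel := prof_rel (red_seller m rs) (red_nbr rn).
Let first_copy : 'I_m := Ordinal m_gt0.

(* Projecting a reduced path onto buyers gives a path of the original
   profile: chain edges collapse, last-copy edges become original edges. *)
Lemma red_reachable_proj (x : B * 'I_m) :
  reachable (red_seller m rs) (red_nbr rn) x -> reachable rs rn x.1.
Proof.
apply: (@connect_map _ _ red_rel _ (omap fst) _ None (Some x)).
move=> [a|] [b|] //=; rewrite /red_rel /= ?inE.
- rewrite /red_nbr; case: ifP => _; rewrite inE.
    by case/andP => /eqP -> _; exact: connect0.
  by case/andP => ab _; apply: connect1.
- by case/andP => sb _; apply: connect1.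
Qed.

Lemma red_chain (k : B) (n : nat) (n_lt_m : (n < m)%N) :
  connect red_rel (Some (k, first_copy)) (Some (k, Ordinal n_lt_m)).
Proof.
elim: n n_lt_m => [|n IH] n_lt_m.
  by have -> : Ordinal n_lt_m = first_copy by apply: val_inj.
apply: connect_trans (IH (ltnW n_lt_m)) _; apply: connect1.
by rewrite /red_rel /= /red_nbr /= n_lt_m inE /= !eqxx.
Qed.

(* Conversely, a path to i lifts to a path to any copy of i: follow the
   path on first copies, walking down each chain to its last copy. *)
Lemma red_reachable_lift (i : B) (j : 'I_m) :
  reachable rs rn i -> reachable (red_seller m rs) (red_nbr rn) (i, j).
Proof.
move=> reach_i; apply: (@connect_trans _ _ (Some (i, first_copy))).
  apply: (@connect_map _ _ _ red_rel (omap (fun b => (b, first_copy)))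
            _ None (Some i) reach_i).
  move=> [a|] [b|] //= edge.
    have last_lt_m : (m.-1 < m)%N by rewrite prednK.
    apply: connect_trans (red_chain a last_lt_m) _; apply: connect1.
    by rewrite /red_rel /= /red_nbr /= prednK // ltnn inE /= edge.
  by apply: connect1; rewrite /red_rel /= inE /= edge.
by case: j => n n_lt_m; apply: red_chain.
Qed.

Lemma red_reachableE :
  [set x | reachable (red_seller m rs) (red_nbr rn) x] =
  setX [set i | reachable rs rn i] [set: 'I_m].
Proof.
apply/setP => -[i j]; rewrite !inE andbT; apply/idP/idP.
  exact: red_reachable_proj.
exact: red_reachable_lift.
Qed.

End ReducedReachability.

Lemma red_nbr_sub (m : nat) (B : finType) (rn tn : B -> {set B})
    (x : B * 'I_m) :
  rn x.1 \subset tn x.1 -> red_nbr rn x \subset red_nbr tn x.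
Proof.
move=> sub; rewrite /red_nbr; case: ifP => _; first exact: subxx.
apply/subsetP => y; rewrite !inE => /andP [y_rn ->]; rewrite andbT.
exact: (subsetP sub).
Qed.

Section Transfer.
Local Open Scope ring_scope.
Variables (R : realFieldType) (m : nat) (Mt : sd_mech R).

(* Each copy of a truthful buyer is a truthful single-demand bidder whose
   reported neighbours are a subset of its true ones; sum over copies. *)
Lemma reduce_IR : sd_IR Mt -> md_IR (reduce m Mt).
Proof.
move=> IR B prio rs tv tn rv rn i true_tv rv_ge0 rn_sub rv_i rn_i /=.
apply: sumr_ge0 => j _.
apply: (IR _ _ _ (red_val tv) (red_nbr tn) (red_val rv) (red_nbr rn) (i, j)).
- by move=> k; case: (true_tv k.1) => ->.
- by move=> k; exact: rv_ge0.
- by move=> k; apply: red_nbr_sub.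
- exact: rv_i.
- by rewrite /red_nbr /= rn_i.
Qed.

Lemma reduce_ND : sd_ND Mt -> md_ND (reduce m Mt).
Proof.
move=> ND B prio rs rv rn rv_ge0 /=; rewrite pair_big /=.
suff -> : \sum_(x : B * 'I_m) sd_pay Mt (red_prio prio) (red_seller m rs)
    (red_val rv) (red_nbr rn) (x.1, x.2) =
  \sum_(x : B * 'I_m) sd_pay Mt (red_prio prio) (red_seller m rs)
    (red_val rv) (red_nbr rn) x.
  exact: ND _ (red_prio prio) (red_seller m rs) (red_val rv) (red_nbr rn)
    (fun k => rv_ge0 k.1 k.2).
by apply: eq_bigr => -[i j].
Qed.

(* Allocated copies are allocated items; reachable copies number m times
   the reachable buyers. *)
Lemma reduce_NW : (0 < m)%N -> sd_NW m Mt -> md_NW (reduce m Mt).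
Proof.
move=> m_gt0 NW B prio rs rv rn rv_ge0 /=.
have := NW _ (red_prio prio) (red_seller m rs) (red_val rv) (red_nbr rn)
  (fun k => rv_ge0 k.1 k.2).
rewrite red_reachableE // cardsX cardsT card_ord mulnC => <-.
by apply: eq_card => -[i j]; rewrite !inE.
Qed.

(* A truthful multi-demand profile with all buyers reachable reduces to a
   truthful single-demand profile with all copies reachable, and the
   multiset of copy valuations is that of all item values. *)
Lemma reduce_Eff : (0 < m)%N -> sd_Eff m Mt -> md_Eff (reduce m Mt).
Proof.
move=> m_gt0 Eff B prio rs tv tn true_tv reach /=.
have := Eff _ (red_prio prio) (red_seller m rs) (red_val tv) (red_nbr tn)
  (fun k => proj1 (true_tv k.1) k.2)
  (fun '(i, j) => red_reachable_lift m_gt0 j (reach i)).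
by rewrite pair_big => <-; apply: eq_bigr => -[i j].
Qed.

End Transfer.

Theorem mainTheorem9 (R : realFieldType) (m : nat) (Mt : sd_mech R) :
  (0 < m)%N -> sd_diffusion Mt ->
  [/\ sd_IR Mt -> md_IR (reduce m Mt),
      sd_ND Mt -> md_ND (reduce m Mt),
      sd_NW m Mt -> md_NW (reduce m Mt) &
      sd_Eff m Mt -> md_Eff (reduce m Mt)].
Proof.
move=> m_gt0 _; split.
- exact: reduce_IR.
- exact: reduce_ND.
- exact: reduce_NW.
- exact: reduce_Eff.
Qed.
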